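(* Let $p,q$ be two distinct prime numbers and $l$ a positive integer. Then $\dfrac{1}{p}\in\mathbb{Q}\text{-}\mathcal{KS}(q^{l})$ if and only if $\dfrac{1}{q}\in\mathbb{Q}\text{-}\mathcal{KS}(p^{l})$.
   Context: Every nonzero rational $\alpha$ is written $\alpha=\alpha_1/\alpha_2$ with $\alpha_1\in\mathbb{Z}$, $\alpha_2$ a positive integer and $\gcd(\alpha_1,\alpha_2)=1$. For an integer $N\ge 2$ and a nonzero rational $\alpha=\alpha_1/\alpha_2$, $N$ is called an $\alpha$-Korselt number if $N\neq\alpha$ and $\alpha_2r-\alpha_1$ divides $\alpha_2N-\alpha_1$ (in $\mathbb{Z}$) for every prime divisor $r$ of $N$. $\mathbb{Q}\text{-}\mathcal{KS}(N)$ is the set of all $\beta\in\mathbb{Q}\setminus\{0,N\}$ such that $N$ is a $\beta$-Korselt number. *)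

From mathcomp Require Import all_boot all_order all_algebra.
Set Implicit Arguments. Unset Strict Implicit. Unset Printing Implicit Defensive.
Import Order.TTheory GRing.Theory Num.Theory.
Local Open Scope ring_scope.

(* alpha = alpha_1 / alpha_2 in lowest terms, alpha_2 > 0:
   alpha_1 = numq alpha, alpha_2 = denq alpha. *)

Definition korselt (alpha : rat) (N : nat) : Prop :=
  [/\ (2 <= N)%N, alpha != 0, alpha != (N%:R : rat) &
    forall r : nat, prime r -> (r %| N)%N ->
      (denq alpha * r%:Z - numq alpha %| denq alpha * N%:Z - numq alpha)%Z].

Definition QKS (N : nat) (beta : rat) : Prop :=
  beta != 0 /\ beta != (N%:R : rat) /\ korselt beta N.

From Corelib Require Import Setoid.
From mathcomp Require Import all_boot all_order all_algebra.
Set Implicit Arguments. Unset Strict Implicit. Unset Printing Implicit Defensive.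
Import Order.TTheory GRing.Theory Num.Theory.
Local Open Scope ring_scope.

(* For N = q ^ l the only prime divisor of N is q, so
   1/p in Q-KS(q ^ l) means pq - 1 | p q^l - 1. Modulo m = pq - 1 we have
   pq = 1, so p q^l = q^(l-1) and the condition reads q^(l-1) = 1 (mod m);
   symmetrically the other side reads p^(l-1) = 1 (mod m). These agree because
   p^(l-1) q^(l-1) = (pq)^(l-1) = 1 (mod m). *)

Lemma numq_inv_nat (p : nat) : (0 < p)%N -> numq (1 / p%:R : rat) = 1.
Proof.
move=> p_gt0; rewrite pmulrn -[1 : rat]/(1%:~R) coprimeq_num ?coprime1n //.
by rewrite mulr1 gtr0_sg // ltz_nat.
Qed.

Lemma denq_inv_nat (p : nat) : (0 < p)%N -> denq (1 / p%:R : rat) = p%:Z.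
Proof.
move=> p_gt0; rewrite pmulrn -[1 : rat]/(1%:~R) coprimeq_den ?coprime1n //.
by rewrite eqz_nat gtn_eqF.
Qed.

Lemma expz_eq1_mod_mul (m a b : int) (k : nat) :
  (a * b = 1 %[mod m])%Z -> (a ^+ k = 1 %[mod m])%Z -> (b ^+ k = 1 %[mod m])%Z.
Proof.
move=> ab1 ak1.
rewrite -[b ^+ k]mul1r -modzMml -[X in (X * _)%R]ak1 modzMml -exprMn.
by rewrite -modzXm ab1 modzXm expr1n.
Qed.

Lemma modz_sub1 (x : int) : (x = 1 %[mod x - 1])%Z.
Proof. by apply/eqP; rewrite eqz_mod_dvd dvdzz. Qed.

Lemma dvdz_mul_exp_sub1 (a b : int) (k : nat) :
  (a * b - 1 %| a * b ^+ k.+1 - 1)%Z = (b ^+ k == 1 %[mod a * b - 1])%Z.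
Proof. by rewrite -eqz_mod_dvd exprS mulrA -modzMml modz_sub1 modzMml mul1r. Qed.

Lemma QKSE (N : nat) (beta : rat) : QKS N beta <-> korselt beta N.
Proof. by split=> [[_ []] | [? ? ? ?]]. Qed.

Lemma korselt_primeX (alpha : rat) (q k : nat) : prime q ->
  korselt alpha (q ^ k.+1) <->
  [/\ alpha != 0, alpha != (q ^ k.+1)%:R &
      (denq alpha * q%:Z - numq alpha %| denq alpha * (q ^ k.+1)%:Z - numq alpha)%Z].
Proof.
move=> q_pr; have qX_ge2 : (2 <= q ^ k.+1)%N.
  by rewrite (leq_trans (prime_gt1 q_pr)) // -{1}[q]expn1 leq_pexp2l // prime_gt0.
split=> [[_ ? ? qX_dvd] | [? ? qX_dvd]].
  by split=> //; apply: qX_dvd; rewrite // Euclid_dvdX ?dvdnn.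
by split=> // r r_pr; rewrite Euclid_dvdX // dvdn_prime2 // => /andP[/eqP-> _].
Qed.

Lemma QKS_inv_prime_primeX (p q k : nat) : prime p -> prime q ->
  QKS (q ^ k.+1) (1 / p%:R) <-> (q%:Z ^+ k = 1 %[mod p%:Z * q%:Z - 1])%Z.
Proof.
move=> p_pr q_pr; have p_gt0 := prime_gt0 p_pr.
have inv_p_neq0 : (1 / p%:R : rat) != 0.
  by rewrite div1r invr_eq0 pnatr_eq0 -lt0n.
have inv_p_notin_nat (n : nat) : (1 / p%:R : rat) != n%:R.
  apply: contraTneq (prime_gt1 p_pr) => inv_p_nat.
  by move: (denq_inv_nat p_gt0); rewrite inv_p_nat pmulrn denq_int => -[<-].
rewrite QKSE korselt_primeX // numq_inv_nat // denq_inv_nat //.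
have -> : (q ^ k.+1)%:Z = q%:Z ^+ k.+1 by rewrite -natz natrX natz.
by rewrite dvdz_mul_exp_sub1; split=> [[_ _ /eqP] | /eqP].
Qed.

Theorem proposition5p3 (p q l : nat) :
  prime p -> prime q -> p <> q -> (0 < l)%N ->
  (QKS (q ^ l) (1 / p%:R) <-> QKS (p ^ l) (1 / q%:R)).
Proof.
case: l => // k p_pr q_pr _ _.
rewrite !QKS_inv_prime_primeX // [q%:Z * _]mulrC.
split; apply: expz_eq1_mod_mul; [rewrite mulrC |]; exact: modz_sub1.
Qed.
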